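(* Let $r,k\geq 2$ be integers. Then $D_{r,k}$ is a numerical semigroup.
   Context: For positive integers $v,b,r,k$, a $(v,b,r,k)$-configuration is a connected bipartite graph with $v$ vertices on one side, each of degree $r$, and $b$ vertices on the other side, each of degree $k$, containing no cycle of length $4$. By convention the empty graph (with $v=b=0$) is also regarded as a configuration. A tuple $(v,b,r,k)$ is configurable if a $(v,b,r,k)$-configuration exists. Let $\mathbb{N}_0=\{0,1,2,\dots\}$ and define $$D_{r,k}=\left\{d\in\mathbb{N}_0:\left(d\tfrac{k}{\gcd(r,k)},\,d\tfrac{r}{\gcd(r,k)},\,r,\,k\right)\text{ is configurable}\right\}.$$ A numerical semigroup is a subset of $\mathbb{N}_0$ containing $0$, closed under addition, whose complement in $\mathbb{N}_0$ is finite. *)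

From mathcomp Require Import all_boot.
Set Implicit Arguments. Unset Strict Implicit. Unset Printing Implicit Defensive.

(* A bipartite (simple) graph with point side 'I_v and line side 'I_b is given
   by its incidence relation inc p l ("point p adjacent to line l"). *)

Definition bip_adj (v b : nat) (inc : 'I_v -> 'I_b -> bool) :
    rel ('I_v + 'I_b)%type :=
  fun x y => match x, y with
             | inl p, inr l => inc p l
             | inr l, inl p => inc p l
             | _, _ => false
             end.

Definition is_configuration (v b r k : nat) (inc : 'I_v -> 'I_b -> bool) : Prop :=
  (* connected (vacuous for the empty graph v = b = 0) *)
  (forall x y : ('I_v + 'I_b)%type, connect (bip_adj inc) x y) /\
  (forall p : 'I_v, #|[set l | inc p l]| = r) /\
  (forall l : 'I_b, #|[set p | inc p l]| = k) /\
  (forall (p1 p2 : 'I_v) (l1 l2 : 'I_b),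
      p1 != p2 -> l1 != l2 ->
      ~ [/\ inc p1 l1, inc p1 l2, inc p2 l1 & inc p2 l2]).

Definition configurable (v b r k : nat) : Prop :=
  exists inc : 'I_v -> 'I_b -> bool, is_configuration r k inc.

Definition D (r k : nat) (d : nat) : Prop :=
  configurable (d * (k %/ gcdn r k)) (d * (r %/ gcdn r k)) r k.

Definition numerical_semigroup (S : nat -> Prop) : Prop :=
  S 0 /\ (forall m n, S m -> S n -> S (m + n)) /\
  (exists N, forall n, N <= n -> S n).

From mathcomp Require Import all_boot ssralg zmodp ring zify.
Set Implicit Arguments. Unset Strict Implicit. Unset Printing Implicit Defensive.
Import GRing.Theory.

(* Two configurations are merged by deleting an edge p1 l1 lying on a cycle of the
   first one and any edge q2 l2 of the second, and adding p1 l2 and q2 l1: degrees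
   are unchanged, no 4-cycle appears, and the graph stays connected; such a cycle
   exists because all degrees are at least 2.  So D_{r,k} is closed under addition.
   For cofiniteness, with g = gcd(r,k), take points Z_n x [k/g] and lines Z_n x [r/g],
   the point (x,i) lying on the line (y,j) when x - y is one of g distinct powers of
   two attached to (i,j).  Sums of two powers of two determine their summands, which
   rules out 4-cycles once n is large, and the graph is connected as soon as n is
   coprime to an odd number s.  Hence D_{r,k} contains the consecutive integers
   2Ns+1 and 2Ns+2 for large N, and a submonoid of N containing a and a+1
   contains every m >= a^2.
*)

Section Incidence.
Variables (P L : finType).

Definition inc_adj (inc : P -> L -> bool) : rel (P + L) :=
  fun x y => match x, y with
             | inl p, inr l | inr l, inl p => inc p l
             | _, _ => false
             end.

Lemma inc_adj_sym inc : symmetric (inc_adj inc).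
Proof. by case=> [p|l] [q|m]. Qed.

Lemma inc_adj_irr inc : irreflexive (inc_adj inc).
Proof. by case. Qed.

Definition configuration (r k : nat) (inc : P -> L -> bool) : Prop :=
  [/\ forall x y : P + L, connect (inc_adj inc) x y,
      forall p, #|[set l | inc p l]| = r,
      forall l, #|[set p | inc p l]| = k &
      forall p1 p2 l1 l2, p1 != p2 -> l1 != l2 ->
        ~ [/\ inc p1 l1, inc p1 l2, inc p2 l1 & inc p2 l2]].

Lemma connect_common_line (inc : P -> L -> bool) p p' l :
  inc p l -> inc p' l -> connect (inc_adj inc) (inl p) (inl p').
Proof. by move=> inc_pl inc_p'l; apply: (@connect_trans _ _ (inr l)); apply: connect1. Qed.

End Incidence.

Lemma is_configurationP (v b r k : nat) (inc : 'I_v -> 'I_b -> bool) :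
  is_configuration r k inc <-> configuration r k inc.
Proof. by split=> [[conn [degP [degL noC4]]] | [conn degP degL noC4]]. Qed.

Lemma homo_connect (T T' : finType) (e : rel T) (e' : rel T') (f : T -> T') :
  {homo f : x y / e x y >-> e' x y} ->
  {homo f : x y / connect e x y >-> connect e' x y}.
Proof.
move=> hf x _ /connectP[p ep ->]; elim: p x ep => [|z p IHp] x /=.
  by rewrite connect0.
by case/andP=> /hf/connect1/connect_trans trans_xz /IHp; apply: trans_xz.
Qed.

Lemma configuration_configurable (P L : finType) r k (inc : P -> L -> bool) :
  configuration r k inc -> configurable #|P| #|L| r k.
Proof.
case=> conn degP degL noC4.
exists (fun p l => inc (enum_val p) (enum_val l)); apply/is_configurationP; split.
- pose val2 (z : 'I_#|P| + 'I_#|L|) : P + L :=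
    match z with inl p => inl (enum_val p) | inr l => inr (enum_val l) end.
  pose rank2 (z : P + L) : 'I_#|P| + 'I_#|L| :=
    match z with inl p => inl (enum_rank p) | inr l => inr (enum_rank l) end.
  have val2K : cancel val2 rank2 by case=> z /=; rewrite enum_valK.
  move=> x y; rewrite -(val2K x) -(val2K y); apply: homo_connect (conn _ _).
  by case=> [p|l] [q|m] //=; rewrite !enum_rankK.
- move=> p; rewrite -(degP (enum_val p)).
  rewrite -[RHS](on_card_preimset (onW_bij _ (enum_val_bij _))).
  by apply: eq_card => l; rewrite !inE.
- move=> l; rewrite -(degL (enum_val l)).
  rewrite -[RHS](on_card_preimset (onW_bij _ (enum_val_bij _))).
  by apply: eq_card => p; rewrite !inE.
- by move=> p1 p2 l1 l2; rewrite -!(inj_eq enum_val_inj); apply: noC4.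
Qed.

Section EdgeRemoval.
Variables (V : finType) (e : rel V).

Definition rem_edge (a b : V) : rel V :=
  fun x y => e x y && ~~ [|| (x == a) && (y == b) | (x == b) && (y == a)].

Lemma rem_edgeC a b : rem_edge a b =2 rem_edge b a.
Proof. by move=> x y; rewrite /rem_edge orbC. Qed.

Hypothesis e_sym : symmetric e.

Lemma rem_edge_sym a b : symmetric (rem_edge a b).
Proof.
move=> x y; rewrite /rem_edge e_sym orbC.
by rewrite (andbC (y == a)) (andbC (y == b)).
Qed.

Lemma connect_rem_edge a b x z : connect e x z ->
  [\/ connect (rem_edge a b) x z, connect (rem_edge a b) a z
    | connect (rem_edge a b) b z].
Proof.
case/connectP=> p; elim/last_ind: p z => [|p y IHp] z /=.
  by move=> _ ->; apply: Or31; apply: connect0.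
rewrite rcons_path last_rcons => /andP[/IHp {}IHp exy] ->.
have [/orP[]/andP[_ /eqP->]|not_ab] :=
  boolP [|| (last x p == a) && (y == b) | (last x p == b) && (y == a)].
- by apply: Or33; apply: connect0.
- by apply: Or32; apply: connect0.
have e'xy : rem_edge a b (last x p) y by rewrite /rem_edge exy not_ab.
case: (IHp _ erefl) => /connect_trans/(_ (connect1 e'xy));
  [apply: Or31 | apply: Or32 | apply: Or33].
Qed.

Hypothesis e_irr : irreflexive e.
Hypothesis two_nbrs : forall v, exists a b, [/\ e v a, e v b & a != b].

Definition next_nbr (u v : V) : V := odflt v [pick w | e v w && (w != u)].

Lemma next_nbrP u v : e v (next_nbr u v) && (next_nbr u v != u).
Proof.
rewrite /next_nbr; case: pickP => [w //|none] /=.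
have [a [b [eva evb neq_ab]]] := two_nbrs v.
have [au|nau] := eqVneq a u; last by move: (none a); rewrite eva nau.
by move: (none b); rewrite evb -au eq_sym neq_ab.
Qed.

Variable x0 : V.

Definition walk_step (uv : V * V) : V * V := (uv.2, next_nbr uv.1 uv.2).
Definition walk n : V := (iter n walk_step (x0, x0)).2.

Lemma walkS n : walk n.+1 = next_nbr (iter n walk_step (x0, x0)).1 (walk n).
Proof. by rewrite /walk iterS. Qed.

Lemma walk_edge n : e (walk n) (walk n.+1).
Proof.
by rewrite walkS; case/andP: (next_nbrP (iter n walk_step (x0, x0)).1 (walk n)).
Qed.

Lemma walk_nonbacktracking n : walk n.+2 != walk n.
Proof. by rewrite walkS; case/andP: (next_nbrP (walk n) (walk n.+1)). Qed.

Lemma walk_repeats : exists j, [exists i : 'I_j, walk i == walk j].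
Proof.
have : ~~ injectiveb (fun t : 'I_#|V|.+1 => walk t).
  by apply/injectiveP => /leq_card; rewrite card_ord ltnn.
case/injectivePn=> s [t neq_st walk_st].
have [lt_st|lt_ts|/val_inj eq_st] := ltngtP s t; last by rewrite eq_st eqxx in neq_st.
  by exists t; apply/existsP; exists (Ordinal lt_st); rewrite /= walk_st.
by exists s; apply/existsP; exists (Ordinal lt_ts); rewrite /= walk_st.
Qed.

(* The first return [walk m.+1 = walk i] of the non-backtracking walk closes a
   cycle [walk i, ..., walk m], so its last edge is not a bridge. *)
Lemma exists_nonbridge : exists a b, e a b /\ connect (rem_edge a b) a b.
Proof.
have [[|m] /existsP[[i lt_im] /= /eqP walk_i] min_m] := ex_minnP walk_repeats => //.
have walk_inj s t : s < t -> t <= m -> walk s != walk t.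
  move=> lt_st le_tm; apply/eqP => walk_st.
  suff : m.+1 <= t by rewrite ltnNge le_tm.
  by apply: min_m; apply/existsP; exists (Ordinal lt_st); rewrite /= walk_st.
have lt_i1m : i.+1 < m.
  have [// | lt_mi1 | eq_m] := ltngtP i.+1 m.
    have eq_mi : m = i by lia.
    by move: (walk_edge i); rewrite -eq_mi -walk_i eq_mi e_irr.
  by move: (walk_nonbacktracking i); rewrite eq_m -walk_i eqxx.
exists (walk m), (walk m.+1); split; first exact: walk_edge.
have path_im d :
    i + d <= m -> connect (rem_edge (walk m) (walk m.+1)) (walk i) (walk (i + d)).
  elim: d => [|d IHd] le_dm; first by rewrite addn0 connect0.
  have le_d : i + d <= m by lia.
  apply: connect_trans (IHd le_d) (connect1 _).
  rewrite /rem_edge addnS walk_edge -walk_i /=.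
  rewrite (negbTE (walk_inj (i + d) m ltac:(lia) (leqnn m))) /=.
  apply/andP=> -[/eqP walk_id /eqP walk_id1].
  have [lt_dm|eq_dm] : i + d.+1 < m \/ i + d.+1 = m by lia.
    by move: (walk_inj _ _ lt_dm (leqnn m)); rewrite addnS walk_id1 eqxx.
  case: d walk_id eq_dm {IHd le_dm le_d walk_id1} => [|d] walk_id eq_dm; first lia.
  by move: (walk_inj i (i + d.+1) ltac:(lia) ltac:(lia)); rewrite walk_id eqxx.
have := path_im (m - i); rewrite subnKC ?walk_i; last lia.
by rewrite (sym_connect_sym (@rem_edge_sym _ _)); apply; lia.
Qed.

End EdgeRemoval.

Lemma card_set_sum (A B : finType) (h : pred (A + B)) :
  #|[set y | h y]| = #|[set a | h (inl a)]| + #|[set b | h (inr b)]|.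
Proof.
rewrite -!sum1_card big_sumType /=.
by congr (_ + _); apply: eq_bigl => z; rewrite !inE.
Qed.

Lemma card_replace (T U : finType) (A : pred T) (b : bool) (t : T) (u : U) :
  (b -> A t) ->
  #|[set x | A x && ~~ (b && (x == t))]| + #|[set y | b && (y == u)]| =
  #|[set x | A x]|.
Proof.
case: b => [/(_ isT) At | _] /=; last first.
  rewrite (@eq_card0 _ [set y : U | false]) => [|y]; last by rewrite inE.
  by rewrite addn0; apply: eq_card => x; rewrite !inE andbT.
rewrite [RHS](cardsD1 t) inE At addnC; congr (_ + _).
  by rewrite /= -(cards1 u); apply: eq_card => y; rewrite !inE.
by apply: eq_card => x; rewrite !inE andbC.
Qed.

Section Glue.
Variables (P1 L1 P2 L2 : finType) (inc1 : P1 -> L1 -> bool) (inc2 : P2 -> L2 -> bool).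
Variables (p1 : P1) (l1 : L1) (q2 : P2) (l2 : L2).

Definition glue_inc (x : P1 + P2) (y : L1 + L2) : bool :=
  match x, y with
  | inl p, inl l => inc1 p l && ~~ ((p == p1) && (l == l1))
  | inr q, inr m => inc2 q m && ~~ ((q == q2) && (m == l2))
  | inl p, inr m => (p == p1) && (m == l2)
  | inr q, inl l => (q == q2) && (l == l1)
  end.

Lemma glue_point_deg r : inc1 p1 l1 -> inc2 q2 l2 ->
  (forall p, #|[set l | inc1 p l]| = r) -> (forall q, #|[set m | inc2 q m]| = r) ->
  forall x, #|[set y | glue_inc x y]| = r.
Proof.
move=> inc_11 inc_22 deg1 deg2 [p|q]; rewrite card_set_sum /=.
  by rewrite card_replace -?(deg1 p) // => /eqP->.
by rewrite addnC card_replace -?(deg2 q) // => /eqP->.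
Qed.

Lemma glue_noC4 :
  (forall p p' l l', p != p' -> l != l' ->
     ~ [/\ inc1 p l, inc1 p l', inc1 p' l & inc1 p' l']) ->
  (forall q q' m m', q != q' -> m != m' ->
     ~ [/\ inc2 q m, inc2 q m', inc2 q' m & inc2 q' m']) ->
  forall x x' y y', x != x' -> y != y' ->
    ~ [/\ glue_inc x y, glue_inc x y', glue_inc x' y & glue_inc x' y'].
Proof.
(* A 4-cycle with a crossing edge needs both crossing edges and then one of the
   deleted edges. *)
move=> noC4_1 noC4_2 [p|p] [p'|p'] [l|l] [l'|l'] /= neq_x neq_y [] h1 h2 h3 h4;
  repeat match goal with
  | H : is_true ((_ == _) && (_ == _)) |- _ => case/andP: H => /eqP ? /eqP ?; subst
  end;
  try by [rewrite eqxx in neq_x | rewrite eqxx in neq_y |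
           match goal with H : _ |- _ => rewrite !eqxx /= andbF in H end].
- apply: (noC4_1 p p' l l' neq_x neq_y).
  by split; [case/andP: h1 | case/andP: h2 | case/andP: h3 | case/andP: h4].
- apply: (noC4_2 p p' l l' neq_x neq_y).
  by split; [case/andP: h1 | case/andP: h2 | case/andP: h3 | case/andP: h4].
Qed.

Lemma glue_connected :
  (forall x y, connect (inc_adj inc1) x y) -> (forall x y, connect (inc_adj inc2) x y) ->
  connect (rem_edge (inc_adj inc1) (inl p1) (inr l1)) (inl p1) (inr l1) ->
  forall x y, connect (inc_adj glue_inc) x y.
Proof.
move=> conn1 conn2 cycle1.
pose e := inc_adj glue_inc; pose root : (P1 + P2) + (L1 + L2) := inl (inl p1).
pose emb1 (z : P1 + L1) : (P1 + P2) + (L1 + L2) :=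
  match z with inl p => inl (inl p) | inr l => inr (inl l) end.
pose emb2 (z : P2 + L2) : (P1 + P2) + (L1 + L2) :=
  match z with inl q => inl (inr q) | inr m => inr (inr m) end.
have hom1 : {homo emb1 : z w / rem_edge (inc_adj inc1) (inl p1) (inr l1) z w >-> e z w}.
  by case=> [p|l] [p'|l'] //; rewrite /rem_edge /= ?orbF // (andbC (l == l1)).
have hom2 : {homo emb2 : z w / rem_edge (inc_adj inc2) (inl q2) (inr l2) z w >-> e z w}.
  by case=> [q|m] [q'|m'] //; rewrite /rem_edge /= ?orbF // (andbC (m == l2)).
have reach1 z : connect e root (emb1 z).
  apply: (homo_connect hom1 (x := inl p1)).
  case: (connect_rem_edge (inl p1) (inr l1) (conn1 (inl p1) z)) => //.
  exact: connect_trans cycle1.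
have reach_q2 : connect e root (emb2 (inl q2)).
  by apply: connect_trans (reach1 (inr l1)) (connect1 _); rewrite /e /= !eqxx.
have reach_l2 : connect e root (emb2 (inr l2)) by apply: connect1; rewrite /e /= !eqxx.
have reach2 z : connect e root (emb2 z).
  case: (connect_rem_edge (inl q2) (inr l2) (conn2 (inl q2) z)) => /(homo_connect hom2).
  - exact: connect_trans reach_q2.
  - exact: connect_trans reach_q2.
  - exact: connect_trans reach_l2.
have reach z : connect e root z.
  by case: z => [[p|q]|[l|m]]; [apply: (reach1 (inl p)) | apply: (reach2 (inl q))
                              | apply: (reach1 (inr l)) | apply: (reach2 (inr m))].
move=> x y; apply: connect_trans (reach y).
by rewrite (sym_connect_sym (@inc_adj_sym _ _ _)).
Qed.

End Glue.

Lemma glue_incT (P1 L1 P2 L2 : finType)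
    (inc1 : P1 -> L1 -> bool) (inc2 : P2 -> L2 -> bool) p1 l1 q2 l2 x y :
  glue_inc inc1 inc2 p1 l1 q2 l2 x y =
  glue_inc (fun l p => inc1 p l) (fun m q => inc2 q m) l1 p1 l2 q2 y x.
Proof. by case: x y => [p|q] [l|m] /=; rewrite (andbC (_ == _)). Qed.

Lemma configuration_nonbridge (P L : finType) r k (inc : P -> L -> bool) :
  2 <= r -> 2 <= k -> configuration r k inc -> P ->
  exists p l, inc p l /\ connect (rem_edge (inc_adj inc) (inl p) (inr l)) (inl p) (inr l).
Proof.
move=> r2 k2 [_ degP degL _] p0.
have two_nbrs v : exists a b, [/\ inc_adj inc v a, inc_adj inc v b & a != b].
  case: v => [p|l].
    have /card_gt1P[a [b [/[!inE] inc_a inc_b neq_ab]]] : 1 < #|[set l | inc p l]|.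
      by rewrite degP.
    by exists (inr a), (inr b).
  have /card_gt1P[a [b [/[!inE] inc_a inc_b neq_ab]]] : 1 < #|[set p | inc p l]|.
    by rewrite degL.
  by exists (inl a), (inl b).
have [a [b [e_ab cycle]]] :=
  exists_nonbridge (@inc_adj_sym _ _ inc) (@inc_adj_irr _ _ inc) two_nbrs (inl p0).
case: a b e_ab cycle => [p|l] [q|m] //= inc_ab cycle; first by exists p, m.
exists q, l; split=> //.
rewrite (eq_connect (rem_edgeC _ _ _)).
by rewrite (sym_connect_sym (rem_edge_sym (@inc_adj_sym _ _ inc) _ _)).
Qed.

Lemma configuration_glue (P1 L1 P2 L2 : finType) r k
    (inc1 : P1 -> L1 -> bool) (inc2 : P2 -> L2 -> bool) :
  2 <= r -> 2 <= k -> P1 -> P2 -> configuration r k inc1 -> configuration r k inc2 ->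
  exists inc : P1 + P2 -> L1 + L2 -> bool, configuration r k inc.
Proof.
move=> r2 k2 p0 q0 G1 G2.
have [p1 [l1 [inc_11 cycle1]]] := configuration_nonbridge r2 k2 G1 p0.
case: G1 G2 => conn1 degP1 degL1 noC4_1 [conn2 degP2 degL2 noC4_2].
have [l2 inc_22] : exists l2, inc2 q0 l2.
  have /card_gt0P[m /[!inE] inc_m] : 0 < #|[set m | inc2 q0 m]| by rewrite degP2; lia.
  by exists m.
exists (glue_inc inc1 inc2 p1 l1 q0 l2); split.
- exact: glue_connected.
- exact: glue_point_deg.
- move=> y; rewrite -(glue_point_deg (inc1 := fun l p => inc1 p l)
    (inc2 := fun m q => inc2 q m) inc_11 inc_22 degL1 degL2 y).
  by apply: eq_card => x; rewrite !inE glue_incT.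
- exact: glue_noC4.
Qed.

Lemma ltn_exp2D a b c d : a <= b -> b < d -> 2 ^ a + 2 ^ b < 2 ^ c + 2 ^ d.
Proof.
move=> le_ab lt_bd.
have : 2 ^ a <= 2 ^ b by rewrite leq_exp2l.
have : 2 ^ b.+1 <= 2 ^ d by rewrite leq_exp2l.
have : 0 < 2 ^ c by rewrite expn_gt0.
rewrite expnS; lia.
Qed.

Lemma eq_exp2D_sorted a b c d : a <= b -> c <= d ->
  2 ^ a + 2 ^ b = 2 ^ c + 2 ^ d -> a = c /\ b = d.
Proof.
move=> le_ab le_cd eq_s; have eq_bd : b = d.
  have [lt_bd|lt_db|//] := ltngtP b d.
    by move: (ltn_exp2D c le_ab lt_bd); rewrite eq_s ltnn.
  by move: (ltn_exp2D a le_cd lt_db); rewrite eq_s ltnn.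
by split=> //; apply: (@expnI 2) => //; move: eq_s; rewrite eq_bd => /addIn.
Qed.

Lemma eq_exp2D a b c d : 2 ^ a + 2 ^ b = 2 ^ c + 2 ^ d ->
  (a = c /\ b = d) \/ (a = d /\ b = c).
Proof.
wlog le_ab : a b / a <= b.
  move=> sorted; have [/sorted//|lt_ba] := leqP a b.
  by rewrite addnC => /(sorted b a (ltnW lt_ba)) [] [-> ->]; [right|left].
wlog le_cd : c d / c <= d.
  move=> sorted; have [/sorted//|lt_dc] := leqP c d.
  by rewrite [in RHS]addnC => /(sorted d c (ltnW lt_dc)) [] [-> ->]; [right|left].
by move/(eq_exp2D_sorted le_ab le_cd); left.
Qed.

Section CyclicConstruction.
Variables (n kk rr g : nat).
Hypotheses (kk_gt0 : 0 < kk) (rr_gt0 : 0 < rr) (g_gt0 : 0 < g).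
Hypothesis n_large : 2 ^ (kk * rr * g) < n.

Definition code (i j t : nat) : nat := (i * rr + j) * g + t.
Definition offset (i j t : nat) : nat := 2 ^ code i j t.

Lemma code_lt (i : 'I_kk) (j : 'I_rr) (t : 'I_g) : code i j t < kk * rr * g.
Proof.
have lt_ij : i * rr + j < kk * rr.
  by have := leq_mul (ltn_ord i) (leqnn rr); have := ltn_ord j; rewrite mulSn; lia.
by have := leq_mul lt_ij (leqnn g); have := ltn_ord t; rewrite /code mulSn; lia.
Qed.

Lemma code_inj i i' (j j' : 'I_rr) (t t' : 'I_g) :
  code i j t = code i' j' t' -> [/\ i = i', j = j' & t = t'].
Proof.
move/(congr1 (edivn^~ g)); rewrite /code !edivn_eq // => -[/(congr1 (edivn^~ rr))].
by rewrite !edivn_eq // => -[-> /val_inj-> /val_inj->].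
Qed.

(* The two alternatives are the degenerate 4-cycles, with l1 = l2 or p1 = p2. *)
Lemma offset_sidon (i1 i2 : 'I_kk) (j1 j2 : 'I_rr) (t1 t2 t3 t4 : 'I_g) :
  offset i1 j1 t1 + offset i2 j2 t4 = offset i1 j2 t2 + offset i2 j1 t3 ->
  (j1 = j2 /\ t1 = t2) \/ (i1 = i2 /\ t1 = t3).
Proof.
case/eq_exp2D => [[/code_inj[_ -> ->] _] | [/code_inj[/val_inj -> _ ->] _]]; by [left|right].
Qed.

Lemma n_gt1 : 1 < n.
Proof. by apply: leq_trans n_large; rewrite ltnS expn_gt0. Qed.

Local Open Scope ring_scope.

Lemma natZp_inj a b : (a < n)%N -> (b < n)%N -> a%:R = b%:R :> 'Z_n -> a = b.
Proof.
move=> lt_an lt_bn /(congr1 (@nat_of_ord _)).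
by rewrite !val_Zp_nat ?n_gt1 // !modn_small.
Qed.

Lemma offset_lt (i : 'I_kk) (j : 'I_rr) (t : 'I_g) : (2 * offset i j t < n)%N.
Proof. by apply: leq_ltn_trans n_large; rewrite /offset -expnS leq_exp2l // code_lt. Qed.

Lemma offset_inj (i : 'I_kk) (j : 'I_rr) (t t' : 'I_g) :
  (offset i j t)%:R = (offset i j t')%:R :> 'Z_n -> t = t'.
Proof.
have lt_n (t'' : 'I_g) : (offset i j t'' < n)%N by have := offset_lt i j t''; lia.
by move/(natZp_inj (lt_n t) (lt_n t'))/expnI/code_inj => -[].
Qed.

Definition cyc_inc (p : 'Z_n * 'I_kk) (l : 'Z_n * 'I_rr) : bool :=
  [exists t : 'I_g, p.1 == l.1 + (offset p.2 l.2 t)%:R].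

Lemma cyc_inc_offset x (i : 'I_kk) y (j : 'I_rr) (t : 'I_g) :
  x = y + (offset i j t)%:R -> cyc_inc (x, i) (y, j).
Proof. by move=> def_x; apply/existsP; exists t; rewrite def_x. Qed.

Lemma cyc_point_deg p : #|[set l | cyc_inc p l]| = (rr * g)%N.
Proof.
case: p => x i.
pose f (jt : 'I_rr * 'I_g) := (x - (offset i jt.1 jt.2)%:R, jt.1).
have f_inj : injective f.
  move=> [j t] [j' t'] /pair_equal_spec[/(addrI x)/oppr_inj + /= eq_j]; rewrite -eq_j.
  by move=> /= /offset_inj->.
have -> : (rr * g)%N = #|f @: setT| by rewrite card_imset // cardsT card_prod !card_ord.
apply: eq_card => -[y j]; rewrite inE.
apply/existsP/imsetP => [[t /eqP /= def_x] | [[j' t] _ /pair_equal_spec[-> ->]]].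
  by exists (j, t); rewrite // /f /= def_x addrK.
by exists t; rewrite /= subrK.
Qed.

Lemma cyc_line_deg l : #|[set p | cyc_inc p l]| = (kk * g)%N.
Proof.
case: l => y j.
pose f (it : 'I_kk * 'I_g) := (y + (offset it.1 j it.2)%:R, it.1).
have f_inj : injective f.
  move=> [i t] [i' t'] /pair_equal_spec[/(addrI y) + /= eq_i]; rewrite -eq_i.
  by move=> /= /offset_inj->.
have -> : (kk * g)%N = #|f @: setT| by rewrite card_imset // cardsT card_prod !card_ord.
apply: eq_card => -[x i]; rewrite inE.
apply/existsP/imsetP => [[t /eqP /= def_x] | [[i' t] _ /pair_equal_spec[-> ->]]].
  by exists (i, t); rewrite // /f /= def_x.
by exists t.
Qed.

Lemma cyc_noC4 p1 p2 l1 l2 : p1 != p2 -> l1 != l2 ->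
  ~ [/\ cyc_inc p1 l1, cyc_inc p1 l2, cyc_inc p2 l1 & cyc_inc p2 l2].
Proof.
case: p1 p2 l1 l2 => [x1 i1] [x2 i2] [y1 j1] [y2 j2] neq_p neq_l.
case=> /existsP[t1 /eqP /= E11] /existsP[t2 /eqP /= E12]
       /existsP[t3 /eqP /= E21] /existsP[t4 /eqP /= E22].
have sum_eq : (offset i1 j1 t1 + offset i2 j2 t4 = offset i1 j2 t2 + offset i2 j1 t3)%N.
  apply: natZp_inj.
  - by have := offset_lt i1 j1 t1; have := offset_lt i2 j2 t4; lia.
  - by have := offset_lt i1 j2 t2; have := offset_lt i2 j1 t3; lia.
  have diffE (x y o : 'Z_n) : x = y + o -> o = x - y by move->; rewrite addrC addKr.
  rewrite !natrD (diffE _ _ _ E11) (diffE _ _ _ E12) (diffE _ _ _ E21) (diffE _ _ _ E22).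
  ring.
case/offset_sidon: sum_eq => [[eq_j eq_t] | [eq_i eq_t]].
  move: E12; rewrite -eq_j -eq_t E11 => /addIr eq_y.
  by rewrite eq_y eq_j eqxx in neq_l.
move: E21; rewrite -eq_i -eq_t -E11 => eq_x.
by rewrite eq_x eq_i eqxx in neq_p.
Qed.

Hypothesis g_case : 1 < g \/ 1 < kk /\ 1 < rr.

(* The shift of the first column along a path through one line (which has two
   points in that column when g > 1) or else through two lines. *)
Definition cyc_step : nat := if (1 < g)%N then 1%N else (2 ^ rr - 1)%N.

Hypothesis coprime_step : coprime n cyc_step.

Let i0 : 'I_kk := Ordinal kk_gt0.
Let j0 : 'I_rr := Ordinal rr_gt0.
Let t0 : 'I_g := Ordinal g_gt0.
Let e := inc_adj cyc_inc.

Lemma cyc_connect_step x : connect e (inl (x, i0)) (inl (x + cyc_step%:R, i0)).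
Proof.
rewrite /cyc_step; case: ifP => [g_gt1 | /negbT g_le1].
  pose t1 : 'I_g := Ordinal g_gt1.
  apply: (@connect_common_line _ _ _ _ _ (x - 1, j0));
    [apply: (cyc_inc_offset (t := t0)) | apply: (cyc_inc_offset (t := t1))];
    rewrite /offset /code /= !(mul0n, add0n) ?expn1; ring.
have g1 : g = 1%N by lia.
have [kk_gt1 rr_gt1] : (1 < kk)%N /\ (1 < rr)%N by case: g_case; rewrite // g1.
pose i1 : 'I_kk := Ordinal kk_gt1; pose j1 : 'I_rr := Ordinal rr_gt1.
pose y1 := x - 2%:R; pose x1 := y1 + (2 ^ rr.+1)%:R; pose y2 := x1 - (2 ^ rr)%:R.
have offsetE i j : offset i j t0 = (2 ^ (i * rr + j))%N.
  by rewrite /offset /code /= [X in (_ * X)%N]g1 muln1 addn0.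
apply: (@connect_trans _ _ (inl (x1, i1))).
  apply: (@connect_common_line _ _ _ _ _ (y1, j1)); apply: (cyc_inc_offset (t := t0));
    by rewrite offsetE /x1 /y1 /= ?mul0n ?mul1n ?addn1 ?expn1 ?subrK.
apply: (@connect_common_line _ _ _ _ _ (y2, j0)); apply: (cyc_inc_offset (t := t0));
  rewrite offsetE /y2 /x1 /y1 /= ?mul0n ?mul1n ?addn0 ?expn0 ?subrK //.
rewrite natrB ?expn_gt0 // expnS natrM; ring.
Qed.

Lemma cyc_connect_steps x m :
  connect e (inl (x, i0)) (inl (x + (m * cyc_step)%:R, i0)).
Proof.
elim: m => [|m IHm]; first by rewrite mul0n addr0 connect0.
apply: connect_trans IHm _.
by rewrite mulSn addnC natrD addrA; apply: cyc_connect_step.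
Qed.

(* Since [cyc_step] is a unit of ['Z_n], every difference [z - x] is a natural
   multiple of it. *)
Lemma cyc_connect_column x z : connect e (inl (x, i0)) (inl (z, i0)).
Proof.
have unit_step : (cyc_step%:R : 'Z_n) \is a GRing.unit by rewrite unitZpE ?n_gt1.
pose w : 'Z_n := (z - x) / cyc_step%:R.
have -> : z = x + (w * cyc_step)%:R by rewrite natrM natr_Zp divrK // addrC subrK.
exact: cyc_connect_steps.
Qed.

Lemma cyc_connected u v : connect e u v.
Proof.
pose root : ('Z_n * 'I_kk) + ('Z_n * 'I_rr) := inl (0, i0).
have reach_line y j : connect e root (inr (y, j)).
  apply: connect_trans (cyc_connect_column 0 (y + (offset i0 j t0)%:R)) (connect1 _).
  exact: cyc_inc_offset.
have reach u' : connect e root u'.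
  case: u' => [[x i] | [y j]]; last exact: reach_line.
  apply: connect_trans (reach_line (x - (offset i j0 t0)%:R) j0) (connect1 _).
  by apply: (cyc_inc_offset (t := t0)); rewrite subrK.
apply: connect_trans (reach v).
by rewrite (sym_connect_sym (@inc_adj_sym _ _ _)).
Qed.

Lemma cyc_configuration : configuration (rr * g) (kk * g) cyc_inc.
Proof.
by split; [exact: cyc_connected | exact: cyc_point_deg | exact: cyc_line_deg | exact: cyc_noC4].
Qed.

End CyclicConstruction.


Lemma divn_gcdr_gt0 r k : 0 < k -> 0 < k %/ gcdn r k.
Proof. by move=> k_gt0; rewrite divn_gt0 ?gcdn_gt0 ?k_gt0 ?orbT // dvdn_leq // dvdn_gcdr. Qed.

Lemma D0 r k : D r k 0.
Proof.
rewrite /D !mul0n; exists (fun _ _ => false).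
by split; last split; last split; [case=> [[]|[]] | case | case | case].
Qed.

Lemma D_add r k m n : 2 <= r -> 2 <= k -> D r k m -> D r k n -> D r k (m + n).
Proof.
move=> r2 k2; have [->|m_gt0] := posnP m; first by rewrite add0n.
have [->|n_gt0] := posnP n; first by rewrite addn0.
move=> [inc1 /is_configurationP G1] [inc2 /is_configurationP G2].
have kk_gt0 : 0 < k %/ gcdn r k by apply: divn_gcdr_gt0; lia.
have p0 : 'I_(m * (k %/ gcdn r k)) by exists 0; rewrite muln_gt0 m_gt0.
have q0 : 'I_(n * (k %/ gcdn r k)) by exists 0; rewrite muln_gt0 n_gt0.
have [inc /configuration_configurable] := configuration_glue r2 k2 p0 q0 G1 G2.
by rewrite /D !card_sum !card_ord !mulnDl.
Qed.

Lemma D_coprime_cofinite r k : 2 <= r -> 2 <= k ->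
  exists2 s, odd s & exists N, forall n, N <= n -> coprime n s -> D r k n.
Proof.
move=> r2 k2; set g := gcdn r k; set kk := k %/ g; set rr := r %/ g.
have g_gt0 : 0 < g by rewrite gcdn_gt0; lia.
have kk_gt0 : 0 < kk by apply: divn_gcdr_gt0; lia.
have rr_gt0 : 0 < rr by rewrite /rr /g gcdnC; apply: divn_gcdr_gt0; lia.
have g_case : 1 < g \/ 1 < kk /\ 1 < rr.
  have [|g_le1] := ltnP 1 g; [by left | right].
  have g1 : g = 1 by lia.
  by rewrite /kk /rr g1 !divn1.
exists (cyc_step rr g).
  rewrite /cyc_step; case: ifP => // _.
  by rewrite oddB ?expn_gt0 // oddX eqn0Ngt rr_gt0.
exists (2 ^ (kk * rr * g)).+1 => n n_large coprime_n.
have /configuration_configurable :=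
  cyc_configuration kk_gt0 rr_gt0 g_gt0 n_large g_case coprime_n.
have n_gt1 := n_gt1 n_large.
rewrite !card_prod !card_ord Zp_cast // /rr /kk !divnK ?dvdn_gcdl ?dvdn_gcdr //.
Qed.

Lemma addn_closed_consecutive (S : nat -> Prop) a :
  S 0 -> (forall m n, S m -> S n -> S (m + n)) -> S a -> S a.+1 ->
  forall m, a * a <= m -> S m.
Proof.
move=> S0 S_add Sa Sa1.
have S_mul q b : S b -> S (q * b).
  by move=> Sb; elim: q => [|q IHq]; rewrite ?mul0n // mulSn; apply: S_add.
have [a0 m _|a_gt0 m le_m] := posnP a.
  by rewrite -(muln1 m); apply: S_mul; rewrite -a0.
have lt_mod : m %% a < a := ltn_pmod m a_gt0.
have le_div : a <= m %/ a by rewrite leq_divRL.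
have -> : m = (m %/ a - m %% a) * a + m %% a * a.+1.
  rewrite {1}(divn_eq m a) mulnBl mulnS.
  by have := leq_mul (ltnW (leq_trans lt_mod le_div)) (leqnn a); lia.
by apply: S_add; apply: S_mul.
Qed.

Lemma addn_closed_cofinite (S : nat -> Prop) s N :
  odd s -> S 0 -> (forall m n, S m -> S n -> S (m + n)) ->
  (forall n, N <= n -> coprime n s -> S n) -> exists N', forall n, N' <= n -> S n.
Proof.
move=> odd_s S0 S_add S_cop; pose a := 2 * N * s + 1.
have coprime_a : coprime a s by rewrite /coprime gcdnC /a gcdnMDl gcdn1.
have coprime_a1 : coprime a.+1 s.
  have -> : a.+1 = 2 * (N * s + 1) by rewrite /a; lia.
  by rewrite coprimeMl coprime2n odd_s /coprime gcdnC gcdnMDl gcdn1.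
have le_Na : N <= a by rewrite /a; have := odd_gt0 odd_s; nia.
exists (a * a); apply: (addn_closed_consecutive S0 S_add).
  exact: S_cop _ le_Na coprime_a.
exact: S_cop _ (leqW le_Na) coprime_a1.
Qed.

Theorem theorem2 (r k : nat) : 2 <= r -> 2 <= k -> numerical_semigroup (D r k).
Proof.
move=> r2 k2; have D_add' m n := @D_add r k m n r2 k2.
split; [exact: D0 | split; first exact: D_add'].
have [s odd_s [N D_cop]] := D_coprime_cofinite r2 k2.
exact: addn_closed_cofinite odd_s (D0 r k) D_add' D_cop.
Qed.
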